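(* Let $n,t,k$ be integers with $n\geq 2t\geq 2$ and $k\geq 2$, and let $u$ be a word of length $t$ over $\Sigma_k=\{0,1,\ldots,k-1\}$. Then \[B_k(n,u)\leq A_k(n-2t,0^t),\] where $0^t$ denotes the word consisting of $t$ zeros.
   Context: A border of a word $w$ is a non-empty word that is both a proper prefix and a proper suffix of $w$. A word $w$ is closed by a word $u$ if $u$ is a border of $w$ and $u$ occurs exactly twice in $w$ as a factor (overlapping occurrences counted). $B_k(n,u)$ denotes the number of words of length $n$ over $\Sigma_k$ that are closed by $u$. $A_k(m,v)$ denotes the number of words of length $m$ over $\Sigma_k$ that do not contain $v$ as a factor (for $m=0$ the empty word is counted). *)

From mathcomp Require Import all_boot.
Set Implicit Arguments. Unset Strict Implicit. Unset Printing Implicit Defensive.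

Definition occ {T : eqType} (u w : seq T) : nat :=
  count (fun i => take (size u) (drop i w) == u) (iota 0 (size w - size u).+1).
(* starting positions i = 0..|w|-|u|; if |u| > |w| the single test fails
   since take returns a shorter word *)

Definition is_border {T : eqType} (u w : seq T) : bool :=
  [&& 0 < size u, size u < size w, prefix u w & suffix u w].

Definition closed_by {T : eqType} (u w : seq T) : bool :=
  is_border u w && (occ u w == 2).

Definition has_factor {T : eqType} (v w : seq T) : bool := infix v w.

Definition B (k n : nat) (u : seq 'I_k) : nat :=
  #|[set w : n.-tuple 'I_k | closed_by u w]|.

Definition A (k m : nat) (v : seq 'I_k) : nat :=
  #|[set w : m.-tuple 'I_k | ~~ has_factor v w]|.

From mathcomp Require Import all_boot perm zify.
Set Implicit Arguments. Unset Strict Implicit. Unset Printing Implicit Defensive.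

(* A word closed by u with 2|u| <= n is u m u, where the middle m has length
   n - 2|u| and avoids u, since a third occurrence of u would be counted by occ.
   Words avoiding u are then injected into words avoiding 0^|u| of the same length:
   read the word letter by letter, keeping the length j of a prefix of u that the
   input has just spelled, and write each letter after swapping u_j with 0; j grows
   on a 0 and resets on anything else. A run of |u| zeros in the output then spells
   out an occurrence of u in the input. *)

Lemma card_tuples_leq (T : finType) m n (P Q : pred (seq T)) (f : seq T -> seq T) :
  (forall w, size w = m -> P w -> size (f w) = n /\ Q (f w)) ->
  {in [pred w | (size w == m) && P w] &, injective f} ->
  #|[set w : m.-tuple T | P w]| <= #|[set w : n.-tuple T | Q w]|.
Proof.
move=> fPQ f_inj; pose g (w : m.-tuple T) : option (n.-tuple T) := insub (f w).
have gE (w : m.-tuple T) : P w -> exists2 v, g w = Some v & val v = f w.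
  move=> Pw; have [fn _] := fPQ w (size_tuple w) Pw.
  by rewrite /g; case: insubP => [v _ <-|]; [exists v | rewrite fn eqxx].
rewrite -(card_in_imset (f := g)); last first.
  move=> w1 w2; rewrite !inE => P1 P2 eq_g; apply: val_inj; apply: f_inj;
    rewrite ?inE ?size_tuple ?eqxx //.
  have [v1 g1 <-] := gE w1 P1; have [v2 g2 <-] := gE w2 P2.
  by move: eq_g; rewrite g1 g2 => -[->].
rewrite -[X in _ <= X](card_imset _ (@Some_inj _)); apply: subset_leq_card.
apply/subsetP => y /imsetP [w]; rewrite inE => Pw ->; have [v -> fv] := gE w Pw.
by rewrite imset_f // inE fv; have [_] := fPQ w (size_tuple w) Pw.
Qed.

Lemma nseq_prefix_cat_cons (T : eqType) (z a : T) j t (p : seq T) :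
  j < t -> a != z -> ~~ prefix (nseq t z) (nseq j z ++ a :: p).
Proof.
move=> + a_z; elim: j t => [|j IH] [|t] //=; first by rewrite eq_sym (negbTE a_z).
by rewrite eqxx; apply: IH.
Qed.

Lemma nseq_infix_cat_cons (T : eqType) (z a : T) j t (p : seq T) :
  j < t -> a != z -> ~~ infix (nseq t z) p -> ~~ infix (nseq t z) (nseq j z ++ a :: p).
Proof.
move=> lt_jt a_z zp; elim: j lt_jt => [|j IH] lt_jt.
  by rewrite /= negb_or zp andbT (nseq_prefix_cat_cons (j := 0)).
rewrite cat_cons infix_consl negb_or -cat_cons IH ?andbT 1?ltnW //.
exact: (nseq_prefix_cat_cons (j := j.+1)).
Qed.

Section Recode.

Variables (T : finType) (z : T) (u : seq T).

Fixpoint recode (j : nat) (w : seq T) : seq T :=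
  if w is c :: w' then
    let a := tperm (nth z u j) z c in a :: recode (if a == z then j.+1 else 0) w'
  else [::].

Lemma size_recode j w : size (recode j w) = size w.
Proof. by elim: w j => //= c w IH j; rewrite IH. Qed.

Lemma recode_inj j : injective (recode j).
Proof.
move=> w1; elim: w1 j => [|c1 w1 IH] j [|c2 w2] //= [eq_a].
by rewrite eq_a => /IH ->; rewrite (perm_inj eq_a).
Qed.

Lemma infix_take_cat_lt j w : ~~ infix u (take j u ++ w) -> j < size u.
Proof.
by rewrite ltnNge; apply: contra => le_uj; rewrite take_oversize // prefix_infix.
Qed.

Lemma recode_avoid j w :
  ~~ infix u (take j u ++ w) -> ~~ infix (nseq (size u) z) (nseq j z ++ recode j w).
Proof.
elim: w j => [|c w IH] j u_w; have lt_j := infix_take_cat_lt u_w.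
  by rewrite cats0; apply/negP => /size_infix; rewrite !size_nseq leqNgt lt_j.
rewrite /=; have [eq_c | c_uj] := eqVneq c (nth z u j).
  rewrite eq_c tpermL eqxx -cat1s catA -[[:: z]]/(nseq 1 z) -nseqD addn1.
  by apply: IH; rewrite (take_nth z lt_j) cat_rcons -eq_c.
have a_z : tperm (nth z u j) z c != z.
  by rewrite -[X in _ != X](tpermL (nth z u j) z) (inj_eq perm_inj).
rewrite (negbTE a_z); apply: nseq_infix_cat_cons => //; apply: (IH 0).
by rewrite take0; apply: contra u_w => /(infix_catl (take j u ++ [:: c])); rewrite -catA.
Qed.
End Recode.

Section Borders.

Variables (T : eqType) (u : seq T).

Definition border_middle (w : seq T) : seq T :=
  take (size w - 2 * size u) (drop (size u) w).

Lemma size_border_middle w :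
  2 * size u <= size w -> size (border_middle w) = size w - 2 * size u.
Proof. by rewrite size_take size_drop; case: ltnP; lia. Qed.

Lemma prefix_suffix_middle w : 2 * size u <= size w ->
  prefix u w -> suffix u w -> w = u ++ border_middle w ++ u.
Proof.
rewrite prefixE suffixE => le_uw /eqP pre /eqP suf.
rewrite -{1}(cat_take_drop (size u) w) pre; congr (_ ++ _).
rewrite -{1}(cat_take_drop (size w - 2 * size u) (drop (size u) w)) drop_drop.
congr (_ ++ _); rewrite -[RHS]suf; congr (drop _ _); lia.
Qed.

Lemma closed_by_middle w : 2 * size u <= size w ->
  closed_by u w -> w = u ++ border_middle w ++ u.
Proof. by move=> le_uw /andP [/and4P [_ _ pre suf] _]; apply: prefix_suffix_middle. Qed.

Definition occurs_at (w : seq T) (i : nat) : bool := take (size u) (drop i w) == u.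

Lemma occurs_at_cat x y : occurs_at (x ++ u ++ y) (size x).
Proof. by rewrite /occurs_at drop_size_cat // take_size_cat. Qed.

Lemma uniq_occurs_at_leq_occ w (s : seq nat) :
  0 < size u -> uniq s -> all (occurs_at w) s -> size s <= occ u w.
Proof.
move=> u_gt0 s_uniq /allP s_occ; rewrite /occ -size_filter.
apply: uniq_leq_size => // i s_i; rewrite mem_filter mem_iota /=.
apply/andP; split; first exact: s_occ.
have := congr1 size (eqP (s_occ i s_i)); rewrite size_take size_drop; case: ltnP; lia.
Qed.

Lemma closed_by_middle_avoid w : 0 < size u -> 2 * size u <= size w ->
  closed_by u w -> ~~ infix u (border_middle w).
Proof.
move=> u_gt0 le_uw closed_w; have w_eq := closed_by_middle le_uw closed_w.
move: closed_w => /andP [_ /eqP occ2]; apply/infixP => -[s [s' mid]].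
rewrite mid in w_eq.
have : size [:: 0; size (u ++ s); size (u ++ s ++ u ++ s')] <= occ u w.
  apply: uniq_occurs_at_leq_occ => //=.
    by rewrite !inE !size_cat; apply/and3P; split; apply/eqP; lia.
  rewrite w_eq; apply/and4P; split=> //; first exact: (@occurs_at_cat [::]).
    have -> : u ++ (s ++ u ++ s') ++ u = (u ++ s) ++ u ++ s' ++ u by rewrite -!catA.
    exact: occurs_at_cat.
  have -> : u ++ (s ++ u ++ s') ++ u = (u ++ s ++ u ++ s') ++ u ++ [::].
    by rewrite cats0 -!catA.
  exact: occurs_at_cat.
by rewrite occ2.
Qed.

End Borders.

Lemma B_le_A_border k n (u : seq 'I_k) :
  0 < size u -> 2 * size u <= n -> B n u <= A (n - 2 * size u) u.
Proof.
move=> u_gt0 le_un.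
apply: (card_tuples_leq (P := closed_by u) (Q := fun w => ~~ has_factor u w)
  (f := border_middle u)).
  move=> w w_n closed_w; rewrite size_border_middle w_n //; split=> //.
  by apply: closed_by_middle_avoid; rewrite ?w_n.
move=> w1 w2; rewrite !inE => /andP [/eqP w1_n closed1] /andP [/eqP w2_n closed2].
move=> eq_mid; rewrite (closed_by_middle _ closed1) ?w1_n // eq_mid.
by rewrite -(closed_by_middle _ closed2) ?w2_n.
Qed.

Lemma A_le_A_nseq k m (u : seq 'I_k) (z : 'I_k) : A m u <= A m (nseq (size u) z).
Proof.
apply: (card_tuples_leq (P := fun w => ~~ has_factor u w)
  (Q := fun w => ~~ has_factor (nseq (size u) z) w) (f := recode z u 0)).
  move=> w w_m u_w; rewrite size_recode; split=> //.
  by apply: (@recode_avoid _ z u 0); rewrite take0.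
exact: in2W (@recode_inj _ z u 0).
Qed.

Theorem lemma6 (n t k : nat) (hk : 2 <= k) (ht : 1 <= t) (hn : 2 * t <= n)
  (u : seq 'I_k) (hu : size u = t) :
  B n u <= A (n - 2 * t) (nseq t (Ordinal (ltnW hk : 0 < k))).
Proof.
subst t; exact: leq_trans (B_le_A_border ht hn) (A_le_A_nseq _ _ _).
Qed.
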